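(* Let $A=(a_{ij})_{1\le i,j\le n}$ be a complex Nekrasov matrix, let $\epsilon_1,\dots,\epsilon_n$ be real numbers satisfying either the conditions (C1) or the conditions (C2) below, and let $S=\mathrm{diag}\left(\frac{h_i(A)+\epsilon_i}{|a_{ii}|}\right)_{i=1}^n$. Define $z_1(A):=1$ and $z_i(A):=\sum_{j=1}^{i-1}|a_{ij}|\frac{z_j(A)}{|a_{jj}|}+1$ for $i=2,\dots,n$. Then $$\|A^{-1}\|_\infty\le \max_{i\in N}\left(\frac{h_i(A)+\epsilon_i}{|a_{ii}|}\right)\,\max_{i\in N}\frac{z_i(A)}{h_i(A)+\epsilon_i-h_i(AS)},$$ where all denominators $h_i(A)+\epsilon_i-h_i(AS)$ are positive.
   Context: For a complex $n\times n$ matrix $A=(a_{ij})$ with $a_{ii}\ne 0$ for all $i$, define recursively $h_1(A):=\sum_{j\ne 1}|a_{1j}|$ and $h_i(A):=\sum_{j=1}^{i-1}|a_{ij}|\frac{h_j(A)}{|a_{jj}|}+\sum_{j=i+1}^{n}|a_{ij}|$ for $i=2,\dots,n$ (the same definition is applied to $AS$ to obtain $h_i(AS)$). $A$ is a Nekrasov matrix if $|a_{ii}|>h_i(A)$ for all $i\in N=\{1,\dots,n\}$. $\|\cdot\|_\infty$ is the maximum absolute row sum norm. Conditions (C1): $\epsilon_1>0$, and for $i=2,\dots,n$: $0<\epsilon_i\le |a_{ii}|-h_i(A)$ and $\epsilon_i>\sum_{j=1}^{i-1}\frac{|a_{ij}|\epsilon_j}{|a_{jj}|}$. Conditions (C2):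 let $k$ be the smallest index such that $a_{kj}=0$ for all $j>k$; $\epsilon_i=0$ for $i=1,\dots,k-1$, and for $i=k,\dots,n$: $0<\epsilon_i<|a_{ii}|-h_i(A)$ and $\epsilon_i>\sum_{j=k}^{i-1}\frac{|a_{ij}|\epsilon_j}{|a_{jj}|}$ (empty sum for $i=k$). *)

From HB Require Import structures.
From mathcomp Require Import all_boot all_order all_algebra.
From mathcomp Require Import complex.
From mathcomp Require Import reals.
Set Implicit Arguments. Unset Strict Implicit. Unset Printing Implicit Defensive.
Import Order.TTheory GRing.Theory Num.Theory.
Local Open Scope ring_scope.

Definition cmod (R : realType) (z : R[i]) : R :=
  Num.sqrt (complex.Re z ^+ 2 + complex.Im z ^+ 2).

(* Generic lower-recursive scheme (indices 0-based):
     g_i = \sum_{j<i} |a_ij| g_j / |a_jj| + c_i.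
   gfun k i is the value computed with recursion depth k; it is the correct
   value as soon as i < k (see gfun_stable / grec_eq below). *)
Fixpoint gfun (R : realType) (n : nat) (A : 'M[R[i]]_n) (c : 'I_n -> R)
    (k : nat) (i : 'I_n) : R :=
  match k with
  | 0 => 0
  | k'.+1 => \sum_(j < n | (j < i)%N) cmod (A i j) * gfun A c k' j / cmod (A j j)
             + c i
  end.

Definition grec (R : realType) (n : nat) (A : 'M[R[i]]_n) (c : 'I_n -> R)
    (i : 'I_n) : R := gfun A c n i.

(* h_i(A) = \sum_{j<i} |a_ij| h_j(A)/|a_jj| + \sum_{j>i} |a_ij|
   (for i = 1 in the paper's 1-based indexing this is \sum_{j<>1} |a_1j|) *)
Definition hA (R : realType) (n : nat) (A : 'M[R[i]]_n) : 'I_n -> R :=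
  grec A (fun i => \sum_(j < n | (i < j)%N) cmod (A i j)).

Definition zA (R : realType) (n : nat) (A : 'M[R[i]]_n) : 'I_n -> R :=
  grec A (fun _ => 1).

Definition nekrasov (R : realType) (n : nat) (A : 'M[R[i]]_n) : Prop :=
  forall i : 'I_n, hA A i < cmod (A i i).

Definition infnorm (R : realType) (n : nat) (B : 'M[R[i]]_n) : R :=
  \big[Num.max/0]_(i < n) \sum_(j < n) cmod (B i j).

Definition Smat (R : realType) (n : nat) (A : 'M[R[i]]_n) (eps : 'I_n -> R)
  : 'M[R[i]]_n :=
  diag_mx (\row_i (((hA A i + eps i) / cmod (A i i))%:C)%C).

(* Conditions (C1), 0-based: the paper's index 1 is our index 0. *)
Definition condC1 (R : realType) (n : nat) (A : 'M[R[i]]_n) (eps : 'I_n -> R)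
  : Prop :=
  (forall i : 'I_n, nat_of_ord i = 0%N -> 0 < eps i) /\
  (forall i : 'I_n, (0 < i)%N ->
     [/\ 0 < eps i, eps i <= cmod (A i i) - hA A i &
         \sum_(j < n | (j < i)%N) cmod (A i j) * eps j / cmod (A j j) < eps i]).

Definition condC2 (R : realType) (n : nat) (A : 'M[R[i]]_n) (eps : 'I_n -> R)
  : Prop :=
  exists k : 'I_n,
    [/\ (forall j : 'I_n, (k < j)%N -> A k j = 0),
        (forall k' : 'I_n, (k' < k)%N -> exists j : 'I_n, (k' < j)%N /\ A k' j != 0),
        (forall i : 'I_n, (i < k)%N -> eps i = 0) &
        (forall i : 'I_n, (k <= i)%N ->
           [/\ 0 < eps i, eps i < cmod (A i i) - hA A i &
               \sum_(j < n | (k <= j < i)%N) cmod (A i j) * eps j / cmod (A j j)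
                 < eps i])].

Lemma gfun_stable (R : realType) (n : nat) (A : 'M[R[i]]_n) (c : 'I_n -> R)
  (k : nat) (i : 'I_n) : (i < k)%N -> gfun A c k i = gfun A c k.+1 i.
Proof.
elim: k i => [//|k IH] i lti /=; congr (_ + _); apply: eq_bigr => j ltji.
by rewrite IH // (leq_trans ltji).
Qed.

Lemma gfun_stable_le (R : realType) (n : nat) (A : 'M[R[i]]_n) (c : 'I_n -> R)
  (k m : nat) (i : 'I_n) : (i < k)%N -> (k <= m)%N -> gfun A c k i = gfun A c m i.
Proof.
move=> lti /subnK <-; elim: (m - k)%N => [//|d IH].
by rewrite addSn -gfun_stable // ?IH // ltn_addl.
Qed.

Lemma grec_eq (R : realType) (n : nat) (A : 'M[R[i]]_n) (c : 'I_n -> R)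
  (i : 'I_n) : grec A c i =
  \sum_(j < n | (j < i)%N) cmod (A i j) * grec A c j / cmod (A j j) + c i.
Proof.
rewrite /grec -(gfun_stable_le A c (ltnSn i) (ltn_ord i)) /=; congr (_ + _).
apply: eq_bigr => j ltji.
by rewrite (gfun_stable_le A c ltji (ltnW (ltn_ord i))).
Qed.

From HB Require Import structures.
From mathcomp Require Import all_boot all_order all_algebra.
From mathcomp Require Import complex.
From mathcomp Require Import reals.
From mathcomp Require Import ring lra.
(* Bound for a Nekrasov matrix B: if |x_j| <= m for all j and |(Bx)_k| <= Y,
   solving row i of Bx for x_i and inserting the bounds already obtained for
   x_j, j < i, gives |b_ii| |x_i| <= h_i(B) m + z_i(B) Y by induction on i.
   At an index where |x_i| = m this yields
   ||B^-1||_oo <= max_i z_i(B) / (|b_ii| - h_i(B)).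

   Scaling the columns of A by S leaves z unchanged and turns the diagonal
   into |a_ii| s_i = h_i(A) + eps_i, while h_i(AS) - h_i(A) obeys the same
   lower recursion as h, driven by the row losses sum_(j > i) |a_ij| (s_j - 1)
   <= 0.  Conditions (C1)/(C2) make eps a strict supersolution of that
   recursion (in (C2) the rows i < k have a strictly negative loss, which
   absorbs eps_i = 0), so h_i(AS) < h_i(A) + eps_i: AS is Nekrasov and
   A^-1 = S (AS)^-1 gives the theorem. *)

Set Implicit Arguments.
Unset Strict Implicit.
Unset Printing Implicit Defensive.

Import Order.TTheory GRing.Theory Num.Theory.
Local Open Scope ring_scope.
Local Open Scope complex_scope.

Section Cmod.
Variable R : realType.
Implicit Types (z w : R[i]) (a : R).

Lemma cmod_normc z : cmod z = Normc.normc z.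
Proof. by case: z. Qed.

Lemma cmod_ge0 z : 0 <= cmod z.
Proof. exact: sqrtr_ge0. Qed.

Lemma cmodM z w : cmod (z * w) = cmod z * cmod w.
Proof. by rewrite !cmod_normc Normc.normcM. Qed.

Lemma cmodV z : cmod z^-1 = (cmod z)^-1.
Proof. by rewrite !cmod_normc Normc.normcV. Qed.

Lemma cmod0 : cmod (0 : R[i]) = 0.
Proof. by rewrite cmod_normc Normc.normc0. Qed.

Lemma cmod_eq0 z : (cmod z == 0) = (z == 0).
Proof.
apply/eqP/eqP => [|->]; last exact: cmod0.
by rewrite cmod_normc => /Normc.eq0_normc.
Qed.

Lemma cmodR a : cmod a%:C = `|a|.
Proof. by rewrite /cmod /= expr0n /= addr0 sqrtr_sqr. Qed.

Lemma cmod_sum (I : finType) (P : pred I) (F : I -> R[i]) :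
  cmod (\sum_(j | P j) F j) <= \sum_(j | P j) cmod (F j).
Proof.
rewrite cmod_normc (eq_bigr _ (fun j _ => cmod_normc (F j))).
exact: (@ler_norm_sum R (Rcomplex R)).
Qed.

Lemma cmodB z w : cmod (z - w) <= cmod z + cmod w.
Proof. by rewrite !cmod_normc (@ler_normB R (Rcomplex R)). Qed.

Lemma cmodD z w : cmod (z + w) <= cmod z + cmod w.
Proof. by rewrite !cmod_normc (@ler_normD R (Rcomplex R)). Qed.

End Cmod.

Lemma ord_ltn_ind n (P : 'I_n -> Prop) :
  (forall i : 'I_n, (forall j : 'I_n, (j < i)%N -> P j) -> P i) -> forall i, P i.
Proof.
move=> IH; suff H k (i : 'I_n) : (i < k)%N -> P i by move=> i; apply: (H n).
elim: k i => [//|k IHk] i lt_ik; apply: IH => j lt_ji.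
exact/IHk/(leq_trans lt_ji).
Qed.

Lemma sum_ord_split (V : nmodType) n (i : 'I_n) (F : 'I_n -> V) :
  \sum_j F j = \sum_(j : 'I_n | (j < i)%N) F j + F i + \sum_(j : 'I_n | (i < j)%N) F j.
Proof.
rewrite (bigD1 i) //= (bigID (fun j : 'I_n => (j < i)%N)) /= addrCA addrA.
congr (_ + _ + _); apply: eq_bigl => j.
  by case: (ltnP j i) => h; rewrite ?andbT ?andbF // neq_ltn h.
by rewrite neq_ltn -leqNgt; case: (ltngtP j i).
Qed.

Lemma sumr_gt0_witness (R : realDomainType) (I : finType) (P : pred I)
    (F : I -> R) l :
  P l -> 0 < F l -> (forall i, P i -> 0 <= F i) -> 0 < \sum_(i | P i) F i.
Proof.
move=> Pl Fl_gt0 F_ge0; rewrite (bigD1 l) //=; apply: ltr_wpDr Fl_gt0.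
by apply: sumr_ge0 => i /andP[/F_ge0].
Qed.

Section LowerRecursion.
Variables (R : realType) (n : nat) (A : 'M[R[i]]_n).
Implicit Types (c e : 'I_n -> R).

Lemma gfun_ge0 c k i : (forall j, 0 <= c j) -> 0 <= gfun A c k i.
Proof.
move=> c_ge0; elim: k i => [//|k IH] i /=.
apply: addr_ge0 => //; apply: sumr_ge0 => j _.
by rewrite divr_ge0 ?mulr_ge0 ?cmod_ge0.
Qed.

Lemma hA_ge0 i : 0 <= hA A i.
Proof. by apply: gfun_ge0 => j; apply: sumr_ge0 => k _; apply: cmod_ge0. Qed.

Lemma grec_ge c i : (forall j, 0 <= c j) -> c i <= grec A c i.
Proof.
move=> c_ge0; rewrite grec_eq lerDr; apply: sumr_ge0 => j _.
by rewrite divr_ge0 ?mulr_ge0 ?cmod_ge0 // /grec gfun_ge0.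
Qed.

Lemma grecD c c1 c2 : (forall i, c i = c1 i + c2 i) ->
  forall i, grec A c i = grec A c1 i + grec A c2 i.
Proof.
move=> eq_c; suff gfunD k i : gfun A c k i = gfun A c1 k i + gfun A c2 k i.
  by move=> i; apply: gfunD.
elim: k i => [|k IH] i /=; first by rewrite addr0.
rewrite eq_c addrACA -big_split /=; congr (_ + _); apply: eq_bigr => j _.
by rewrite IH mulrDr mulrDl.
Qed.

Lemma grec_lt c e :
  (forall i : 'I_n,
     \sum_(j : 'I_n | (j < i)%N) cmod (A i j) * e j / cmod (A j j) + c i < e i) ->
  forall i, grec A c i < e i.
Proof.
move=> super; apply: ord_ltn_ind => i IH; rewrite grec_eq.
apply: le_lt_trans (super i); rewrite lerD2r; apply: ler_sum => j lt_ji.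
rewrite ler_wpM2r ?invr_ge0 ?cmod_ge0 // ler_wpM2l ?cmod_ge0 //.
exact/ltW/IH.
Qed.

Lemma gfun_scale_cols (d : 'I_n -> R[i]) c k i : (forall j, d j != 0) ->
  gfun (A *m diag_mx (\row_j d j)) c k i = gfun A c k i.
Proof.
move=> d_neq0; elim: k i => [//|k IH] i /=; congr (_ + _); apply: eq_bigr => j _.
have dj_neq0 : cmod (d j) != 0 by rewrite cmod_eq0.
rewrite IH mul_mx_diag !mxE !cmodM -!mulrA; congr (_ * _).
by rewrite invfM mulrC -!mulrA mulVf // mulr1.
Qed.

End LowerRecursion.

Definition nekrasov_const (R : realType) n (B : 'M[R[i]]_n) : R :=
  \big[Num.max/0]_(j < n) (zA B j / (cmod (B j j) - hA B j)).

Lemma row_sum_le_infnorm (R : realType) n (C : 'M[R[i]]_n) i :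
  \sum_j cmod (C i j) <= infnorm C.
Proof. exact: le_bigmax. Qed.

Section NekrasovBound.
Variables (R : realType) (n : nat) (B : 'M[R[i]]_n).
Hypothesis nekB : nekrasov B.

Let diag_gt0 (j : 'I_n) : 0 < cmod (B j j).
Proof. exact: le_lt_trans (hA_ge0 B j) (nekB j). Qed.

Section Solution.
Variables (x : 'cV[R[i]]_n) (Y : R).
Hypothesis Bx_le : forall k, cmod ((B *m x) k 0) <= Y.

Let m := \big[Num.max/0]_(j < n) cmod (x j 0).

Let x_le_m j : cmod (x j 0) <= m.
Proof. exact: le_bigmax. Qed.

Lemma nekrasov_diag_bound i : cmod (B i i) * cmod (x i 0) <= hA B i * m + zA B i * Y.
Proof.
elim/ord_ltn_ind: i => i IH.
have Bx_i : (B *m x) i 0 = \sum_j B i j * x j 0 by rewrite mxE.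
rewrite (sum_ord_split i) in Bx_i.
set S1 := \sum_(j : 'I_n | (j < i)%N) _ in Bx_i.
set S2 := \sum_(j : 'I_n | (i < j)%N) _ in Bx_i.
have -> : cmod (B i i) * cmod (x i 0) = cmod ((B *m x) i 0 - (S1 + S2)).
  by rewrite -cmodM Bx_i; congr cmod; ring.
set SX := \sum_(j : 'I_n | (j < i)%N) cmod (B i j) * hA B j / cmod (B j j).
set SZ := \sum_(j : 'I_n | (j < i)%N) cmod (B i j) * zA B j / cmod (B j j).
set T := \sum_(j : 'I_n | (i < j)%N) cmod (B i j).
have hE : hA B i = SX + T by rewrite /hA grec_eq.
have zE : zA B i = SZ + 1 by rewrite /zA grec_eq.
have S1_le : cmod S1 <= m * SX + Y * SZ.
  apply: le_trans (cmod_sum _ _) _.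
  rewrite /SX /SZ !mulr_sumr -big_split /=; apply: ler_sum => j lt_ji.
  have -> : m * (cmod (B i j) * hA B j / cmod (B j j)) +
      Y * (cmod (B i j) * zA B j / cmod (B j j)) =
      cmod (B i j) * ((hA B j * m + zA B j * Y) / cmod (B j j)) by ring.
  by rewrite cmodM ler_wpM2l ?cmod_ge0 // ler_pdivlMr // mulrC IH.
have S2_le : cmod S2 <= m * T.
  apply: le_trans (cmod_sum _ _) _.
  rewrite /T mulr_sumr; apply: ler_sum => j _; rewrite cmodM mulrC.
  by rewrite ler_wpM2r ?cmod_ge0.
have := le_trans (cmodB _ _) (lerD (Bx_le i) (cmodD S1 S2)).
rewrite hE zE; nra.
Qed.

Lemma nekrasov_solution_bound i : cmod (x i 0) <= nekrasov_const B * Y.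
Proof.
have Y_ge0 : 0 <= Y := le_trans (cmod_ge0 _) (Bx_le i).
apply: le_trans (x_le_m i) _.
have [i1 _ m_eq] := @eq_bigmax _ _ _ 0 i predT (fun j => cmod (x j 0)) isT
  (fun j _ => cmod_ge0 _).
rewrite -/m in m_eq; rewrite m_eq.
have gap_gt0 : 0 < cmod (B i1 i1) - hA B i1 by rewrite subr_gt0.
have := nekrasov_diag_bound i1; rewrite m_eq => diag_i1.
have : cmod (x i1 0) <= zA B i1 / (cmod (B i1 i1) - hA B i1) * Y.
  by rewrite mulrAC ler_pdivlMr //; nra.
move/le_trans; apply; rewrite ler_wpM2r //.
exact: le_bigmax.
Qed.

End Solution.

Lemma nekrasov_unitmx : B \in unitmx.
Proof.
rewrite unitmxE unitfE -det_tr; apply/negP => /det0P [v v_neq0 vBT].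
have Bv : B *m v^T = 0 by rewrite -[B]trmxK -trmx_mul vBT trmx0.
have v_le0 j : cmod (v^T j 0) <= nekrasov_const B * 0.
  by apply: nekrasov_solution_bound => k; rewrite Bv mxE cmod0.
move/negP: v_neq0; apply; apply/eqP/matrixP => a j; rewrite (ord1 a) mxE.
apply/eqP; rewrite -cmod_eq0 eq_le cmod_ge0 andbT.
by move: (v_le0 j); rewrite mulr0 mxE.
Qed.

Lemma nekrasov_infnorm_invmx : infnorm (invmx B) <= nekrasov_const B.
Proof.
set C := invmx B; apply: bigmax_le => [|i _]; first exact: bigmax_ge_id.
pose y := \col_k ((cmod (C i k))%:C / C i k).
have y_le1 k : cmod (y k 0) <= 1.
  rewrite mxE cmodM cmodV cmodR ger0_norm ?cmod_ge0 //.
  by have [->|nz] := eqVneq (cmod (C i k)) 0; rewrite ?mul0r ?divff.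
have xi : (C *m y) i 0 = (\sum_j cmod (C i j))%:C.
  rewrite mxE rmorph_sum; apply: eq_bigr => k _; rewrite mxE.
  have [->|nz] := eqVneq (C i k) 0; first by rewrite cmod0 mul0r.
  by rewrite mulrC divfK.
have := @nekrasov_solution_bound (C *m y) 1 _ i.
rewrite xi cmodR ger0_norm ?sumr_ge0 // => [|j _]; last exact: cmod_ge0.
rewrite mulr1; apply => k; rewrite mulmxA mulmxV ?mul1mx //.
exact: nekrasov_unitmx.
Qed.

End NekrasovBound.

Lemma infnorm_diag_mul (R : realType) n (d : 'rV[R[i]]_n) (C : 'M[R[i]]_n) D :
  0 <= D -> (forall i, cmod (d 0 i) <= D) -> infnorm (diag_mx d *m C) <= D * infnorm C.
Proof.
move=> D_ge0 d_le; apply: bigmax_le => [|i _]; first by rewrite mulr_ge0 ?bigmax_ge_id.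
rewrite mul_diag_mx; under eq_bigr do rewrite mxE cmodM.
rewrite -mulr_sumr ler_pM ?cmod_ge0 ?row_sum_le_infnorm //.
by apply: sumr_ge0 => j _; apply: cmod_ge0.
Qed.

Section ScaledNekrasov.
Variables (R : realType) (n : nat) (A : 'M[R[i]]_n) (eps : 'I_n -> R).
Hypotheses (nekA : nekrasov A) (epsC : condC1 A eps \/ condC2 A eps).

Let s j := (hA A j + eps j) / cmod (A j j).
Let AS := A *m Smat A eps.

Let diag_gt0 (j : 'I_n) : 0 < cmod (A j j).
Proof. exact: le_lt_trans (hA_ge0 A j) (nekA j). Qed.

Let eps_ge0 j : 0 <= eps j.
Proof.
case: epsC => [[eps0 epsS]|[k [_ _ eps_lt_k eps_ge_k]]].
- by case: (posnP j) => [/eps0/ltW //|/epsS[/ltW]].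
- by case: (ltnP j k) => [/eps_lt_k->//|/eps_ge_k[/ltW]].
Qed.

Let row_tail_gt0 (j l : 'I_n) : (j < l)%N -> A j l != 0 ->
  0 < \sum_(l0 : 'I_n | (j < l0)%N) cmod (A j l0).
Proof.
move=> lt_jl Ajl_neq0; apply: sumr_gt0_witness lt_jl _ (fun _ _ => cmod_ge0 _).
by rewrite lt0r cmod_eq0 Ajl_neq0 cmod_ge0.
Qed.

Let hA_eps_gt0 j : 0 < hA A j + eps j.
Proof.
case: epsC => [[eps0 epsS]|[k [_ k_min eps_lt_k eps_ge_k]]].
- rewrite ltr_wpDl ?hA_ge0 //.
  by case: (posnP j) => [/eps0 //|/epsS[]].
- case: (ltnP j k) => [lt_jk|/eps_ge_k[eps_gt0 _ _]]; last first.
    by rewrite ltr_wpDl ?hA_ge0.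
  have [l [lt_jl Ajl_neq0]] := k_min j lt_jk.
  rewrite eps_lt_k // addr0; apply: lt_le_trans (row_tail_gt0 lt_jl Ajl_neq0) _.
  by apply: grec_ge => i; apply: sumr_ge0 => *; apply: cmod_ge0.
Qed.

Let s_gt0 j : 0 < s j.
Proof. exact: divr_gt0. Qed.

Let s_le1 (j : 'I_n) : (0 < j)%N -> s j <= 1.
Proof.
move=> j_gt0; rewrite ler_pdivrMr // mul1r.
case: epsC => [[_ epsS]|[k [_ _ eps_lt_k eps_ge_k]]].
- by case: (epsS j j_gt0) => _ eps_le _; rewrite -lerBrDl.
- case: (ltnP j k) => [/eps_lt_k->|/eps_ge_k[_ eps_lt _]].
    by rewrite addr0 ltW.
  by rewrite -lerBrDl ltW.
Qed.

Let AS_entry i j : AS i j = A i j * (s j)%:C.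
Proof. by rewrite /AS /Smat mul_mx_diag !mxE. Qed.

Let s_neq0 j : (s j)%:C != 0.
Proof. by rewrite eq_complex /= eqxx andbT gt_eqF. Qed.

Lemma cmod_scale_factor j : cmod (s j)%:C = s j.
Proof. by rewrite cmodR gtr0_norm. Qed.

Lemma cmod_scaled_diag j : cmod (AS j j) = hA A j + eps j.
Proof.
by rewrite AS_entry cmodM cmodR gtr0_norm // mulrC divfK // gt_eqF.
Qed.

Lemma zA_scaled i : zA AS i = zA A i.
Proof. exact: gfun_scale_cols. Qed.

Let E (i : 'I_n) := \sum_(j : 'I_n | (j < i)%N) cmod (A i j) * eps j / cmod (A j j).
Let F (i : 'I_n) := \sum_(j : 'I_n | (i < j)%N) cmod (A i j) * (s j - 1).

Let hA_scaled i : hA AS i = hA A i + grec A F i.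
Proof.
rewrite /hA {1}/grec gfun_scale_cols -/(grec _ _ _) //.
apply: (grecD A) => {}i; rewrite -big_split /=; apply: eq_bigr => j _.
by rewrite AS_entry cmodM cmodR gtr0_norm //; ring.
Qed.

Let F_le0 i : F i <= 0.
Proof.
apply: sumr_le0 => j lt_ij; rewrite mulr_ge0_le0 ?cmod_ge0 // subr_le0.
exact/s_le1/(leq_ltn_trans _ lt_ij).
Qed.

Let slack_lt i : E i + F i < eps i.
Proof.
case: epsC => [[eps0 epsS]|[k [_ k_min eps_lt_k eps_ge_k]]].
- case: (posnP i) => [i0|/epsS[_ _ E_lt]]; last first.
    by rewrite -[eps i]addr0 ltr_leD.
  rewrite /E big_pred0 => [|j]; last by rewrite i0 ltn0.
  by rewrite add0r (le_lt_trans (F_le0 i)) ?eps0.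
- have [lt_ik|le_ki] := ltnP i k.
    rewrite /E big1 => [|j lt_ji]; last by rewrite eps_lt_k ?(ltn_trans lt_ji) // mulr0 mul0r.
    have [l [lt_il Ail_neq0]] := k_min i lt_ik.
    have s_lt1 (j : 'I_n) : s j < 1.
      rewrite ltr_pdivrMr // mul1r; have [/eps_lt_k->|/eps_ge_k[_ eps_lt _]] := ltnP j k.
        by rewrite addr0 nekA.
      by rewrite -ltrBrDl.
    rewrite add0r (lt_le_trans _ (eps_ge0 i)) // -oppr_gt0 -sumrN.
    apply: sumr_gt0_witness lt_il _ _ => [|j _].
      by rewrite -mulrN pmulr_rgt0 ?oppr_gt0 ?subr_lt0 // lt0r cmod_eq0 Ail_neq0 cmod_ge0.
    by rewrite -mulrN mulr_ge0 ?cmod_ge0 // oppr_ge0 subr_le0 ltW.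
  have E_eq : E i = \sum_(j : 'I_n | (k <= j < i)%N) cmod (A i j) * eps j / cmod (A j j).
    rewrite /E (bigID (fun j : 'I_n => (k <= j)%N)) /= [X in _ + X]big1 ?addr0.
      by apply: eq_bigl => j; rewrite andbC.
    by move=> j /andP[_]; rewrite -ltnNge => /eps_lt_k->; rewrite mulr0 mul0r.
  have [_ _ E_lt] := eps_ge_k i le_ki.
  by rewrite -[eps i]addr0 E_eq ltr_leD.
Qed.

Lemma hA_scaled_lt i : hA AS i < hA A i + eps i.
Proof.
rewrite hA_scaled ltrD2l; apply: grec_lt => {}i.
by have := slack_lt i; rewrite /E /F.
Qed.

Lemma nekrasov_scaled : nekrasov AS.
Proof. by move=> i; rewrite cmod_scaled_diag hA_scaled_lt. Qed.

Lemma invmx_scaled : invmx A = Smat A eps *m invmx AS.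
Proof.
have AS_unit : AS \in unitmx := nekrasov_unitmx nekrasov_scaled.
have A_unit : A \in unitmx by move: AS_unit; rewrite unitmx_mul => /andP[].
by rewrite -[RHS](mulKmx A_unit) [A *m _]mulmxA (mulmxV AS_unit) mulmx1.
Qed.

End ScaledNekrasov.

Theorem mainTheorem5 (R : realType) (n : nat) (A : 'M[R[i]]_n)
  (eps : 'I_n -> R) :
  nekrasov A -> condC1 A eps \/ condC2 A eps ->
  (forall i : 'I_n, 0 < hA A i + eps i - hA (A *m Smat A eps) i) /\
  infnorm (invmx A) <=
    (\big[Num.max/0]_(i < n) ((hA A i + eps i) / cmod (A i i))) *
    (\big[Num.max/0]_(i < n)
        (zA A i / (hA A i + eps i - hA (A *m Smat A eps) i))).
Proof.
move=> nekA epsC; split=> [i|]; first by rewrite subr_gt0 hA_scaled_lt.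
rewrite (invmx_scaled nekA epsC).
have scale_ge0 : 0 <= \big[Num.max/0]_(i < n) ((hA A i + eps i) / cmod (A i i)).
  exact: bigmax_ge_id.
apply: le_trans (infnorm_diag_mul _ scale_ge0 _) (ler_wpM2l scale_ge0 _) => [i|].
  by rewrite mxE cmod_scale_factor //; apply: le_bigmax.
apply: le_trans (nekrasov_infnorm_invmx (nekrasov_scaled nekA epsC)) _.
by apply: le_bigmax2 => j _; rewrite (zA_scaled nekA epsC) (cmod_scaled_diag nekA epsC).
Qed.
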